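(* For $n=0,1,2,\dots$ let $H_n$ denote the $n$-th (physicists') Hermite polynomial and define $h_n(x)=e^{-x^2}\left[H_{n+1}^2(x)-H_n(x)H_{n+2}(x)\right]$ for $x\in\mathbb{R}$. Then $h_n$ is positive on $\mathbb{R}$ and satisfies, for all $x\in\mathbb{R}$, \[ h_n(x)\le\begin{cases}\dfrac{4^{n+1}}{2\pi}\,\dfrac{2n+3}{n+1}\,\Gamma^2\!\left(\frac n2+1\right), & n\text{ odd},\\[3ex] \dfrac{4^{n+1}}{2\pi}\,(n+1)\,\Gamma^2\!\left(\frac{n+1}{2}\right), & n\text{ even}.\end{cases} \]
   Context: The physicists' Hermite polynomials are defined by $H_0(x)=1$, $H_1(x)=2x$, $H_{n+1}(x)=2xH_n(x)-2nH_{n-1}(x)$; equivalently $H_n(x)=(-1)^ne^{x^2}\frac{d^n}{dx^n}e^{-x^2}$. $\Gamma$ denotes the Gamma function. *)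

From Stdlib Require Import Reals.
From Coquelicot Require Import Coquelicot.
Open Scope R_scope.

Fixpoint hermite (n : nat) (x : R) : R :=
  match n with
  | O => 1
  | S m =>
      match m with
      | O => 2 * x
      | S k => 2 * x * hermite m x - 2 * INR m * hermite k x
      end
  end.

Definition Gamma (s : R) : R :=
  RInt_gen (fun t => Rpower t (s - 1) * exp (- t)) (at_right 0) (Rbar_locally p_infty).

Definition hfun (n : nat) (x : R) : R :=
  exp (- x ^ 2) * (hermite (S n) x ^ 2 - hermite n x * hermite (S (S n)) x).

Definition hbound (n : nat) : R :=
  if Nat.odd n then
    4 ^ (S n) / (2 * PI) * ((2 * INR n + 3) / (INR n + 1)) * (Gamma (INR n / 2 + 1)) ^ 2
  else
    4 ^ (S n) / (2 * PI) * (INR n + 1) * (Gamma ((INR n + 1) / 2)) ^ 2.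

From Stdlib Require Import Reals Lra Lia Psatz Wf_nat.
From Coquelicot Require Import Coquelicot.
Open Scope R_scope.

(* Positivity: D_n = H_{n+1}^2 - H_n H_{n+2} satisfies D_0 = 2 and
   D_{n+1} = 2(n+1) D_n + 2 H_{n+1}^2.

   Upper bound: with N = n+1, the function E = h_n + e^{-x^2} H_{n+1}^2 / (2N) has
   derivative -(x/N) e^{-x^2} H_{n+1}^2, so h_n <= E <= E(0).  One of H_n(0), H_{n+1}(0)
   vanishes, and E(0) is exactly the stated bound because
   16^m Gamma(m+1/2)^2 = pi H_{2m}(0)^2.  This follows from Gamma(s+1) = s Gamma(s) and
   Gamma(1/2) = sqrt pi, i.e. the Gaussian integral, which is evaluated by noting that
   (int_0^x e^{-u^2} du)^2 + int_0^1 e^{-x^2(1+t^2)} / (1+t^2) dt has zero derivative. *)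

(** * Hermite polynomials *)

Lemma hermite_0 x : hermite 0 x = 1.
Proof. reflexivity. Qed.

Lemma hermite_1 x : hermite 1 x = 2 * x.
Proof. reflexivity. Qed.

Lemma hermite_SS n x :
  hermite (S (S n)) x = 2 * x * hermite (S n) x - 2 * INR (S n) * hermite n x.
Proof. reflexivity. Qed.

Lemma is_derive_hermite n x :
  is_derive (hermite n) x (2 * x * hermite n x - hermite (S n) x).
Proof.
  revert x; induction n as [n IH] using lt_wf_ind; intro x; destruct n as [|[|k]].
  - replace (2 * x * hermite 0 x - hermite 1 x) with 0 by (simpl; ring).
    apply (is_derive_const 1).
  - simpl hermite. auto_derive; [easy | ring].
  - pose proof (IH k ltac:(lia) x) as Dk. pose proof (IH (S k) ltac:(lia) x) as Dk1.
    eapply is_derive_ext; [intro y; symmetry; apply hermite_SS |].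
    replace (2 * x * hermite (S (S k)) x - hermite (S (S (S k))) x)
      with (2 * hermite (S k) x + 2 * x * (2 * x * hermite (S k) x - hermite (S (S k)) x)
            - 2 * INR (S k) * (2 * x * hermite k x - hermite (S k) x))
      by (rewrite !hermite_SS, !S_INR; ring).
    apply (is_derive_minus (K := R_AbsRing) (V := R_NormedModule)).
    + apply (is_derive_mult (K := R_AbsRing) (fun y => 2 * y)); [| exact Dk1 | apply Rmult_comm].
      auto_derive; [easy | ring].
    + apply is_derive_scal, Dk.
Qed.

Lemma ex_derive_hermite n x : ex_derive (hermite n) x.
Proof. eexists; apply is_derive_hermite. Qed.

Lemma Derive_hermite n x : Derive (fun y => hermite n y) x = 2 * x * hermite n x - hermite (S n) x.
Proof. apply is_derive_unique, is_derive_hermite. Qed.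

Arguments hermite : simpl never.

Lemma hermite_odd_0 m : hermite (S (2 * m)) 0 = 0.
Proof.
  induction m as [|m IH]; [apply Rmult_0_r |].
  replace (S (2 * S m)) with (S (S (S (2 * m)))) by lia.
  rewrite hermite_SS, IH; ring.
Qed.

Lemma hermite_even_0_S m : hermite (2 * S m) 0 = - 2 * INR (S (2 * m)) * hermite (2 * m) 0.
Proof.
  replace (2 * S m)%nat with (S (S (2 * m))) by lia.
  rewrite hermite_SS, hermite_odd_0; ring.
Qed.

Definition turan (n : nat) (x : R) : R :=
  hermite (S n) x ^ 2 - hermite n x * hermite (S (S n)) x.

Lemma turan_S n x : turan (S n) x = 2 * INR (S n) * turan n x + 2 * hermite (S n) x ^ 2.
Proof. unfold turan; rewrite !hermite_SS, !S_INR; ring. Qed.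

Lemma turan_pos n x : 0 < turan n x.
Proof.
  induction n as [|n IH]; [unfold turan; rewrite hermite_SS, hermite_1, hermite_0; simpl; lra |].
  rewrite turan_S.
  pose proof (lt_0_INR (S n) ltac:(lia)). pose proof (pow2_ge_0 (hermite (S n) x)).
  nra.
Qed.

(** * The Lyapunov function *)

Lemma le_at_0_of_is_derive (f df : R -> R) :
  (forall x, is_derive f x (df x)) -> (forall x, x * df x <= 0) -> forall x, f x <= f 0.
Proof.
  intros Hf Hsign x.
  assert (Hmvt : forall a b, a < b -> exists c, f b - f a = df c * (b - a) /\ a < c < b).
  { intros a b Hab. apply MVT_cor2; [exact Hab |]. intros c _. apply is_derive_Reals, Hf. }
  destruct (Rtotal_order x 0) as [Hx | [-> | Hx]]; [| lra |].
  - destruct (Hmvt x 0 Hx) as (c & Hc & Hxc & Hc0). specialize (Hsign c). nra.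
  - destruct (Hmvt 0 x Hx) as (c & Hc & H0c & Hcx). specialize (Hsign c). nra.
Qed.

Lemma is_derive_0_const (f : R -> R) : (forall x, is_derive f x 0) -> forall x, f x = f 0.
Proof.
  intros Hf x. apply Rle_antisym.
  - apply (le_at_0_of_is_derive f (fun _ => 0)); [exact Hf | intro; lra].
  - apply Ropp_le_cancel, (le_at_0_of_is_derive (fun y => - f y) (fun _ => - 0)); [| intro; lra].
    intro y. apply (is_derive_opp (K := R_AbsRing) (V := R_NormedModule)), Hf.
Qed.

Definition lyapunov (n : nat) (x : R) : R :=
  hfun n x + exp (- x ^ 2) * hermite (S n) x ^ 2 / (2 * INR (S n)).

Lemma is_derive_lyapunov n x :
  is_derive (lyapunov n) x (- (x / INR (S n)) * exp (- x ^ 2) * hermite (S n) x ^ 2).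
Proof.
  unfold lyapunov, hfun. auto_derive.
  - repeat split; apply ex_derive_hermite.
  - change (match n with 0%nat => 1 | S _ => INR n + 1 end) with (INR (S n)).
    rewrite !Derive_hermite, !hermite_SS, !S_INR.
    replace (- (x * (x * 1))) with (- x ^ 2) by ring.
    field. pose proof (pos_INR n). lra.
Qed.

Lemma hfun_le_lyapunov n x : hfun n x <= lyapunov n x.
Proof.
  unfold lyapunov. pose proof (lt_0_INR (S n) ltac:(lia)).
  assert (0 <= exp (- x ^ 2) * hermite (S n) x ^ 2 / (2 * INR (S n))).
  { apply Rdiv_le_0_compat; [| lra].
    apply Rmult_le_pos; [apply Rlt_le, exp_pos | apply pow2_ge_0]. }
  lra.
Qed.

Lemma lyapunov_le_0 n x : lyapunov n x <= lyapunov n 0.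
Proof.
  apply (le_at_0_of_is_derive _ _ (is_derive_lyapunov n)). intro y.
  pose proof (lt_0_INR (S n) ltac:(lia)).
  assert (0 <= y ^ 2 * exp (- y ^ 2) * hermite (S n) y ^ 2 / INR (S n)).
  { apply Rdiv_le_0_compat; [| lra].
    apply Rmult_le_pos; [apply Rmult_le_pos |]; auto using pow2_ge_0, Rlt_le, exp_pos. }
  replace (y * (- (y / INR (S n)) * exp (- y ^ 2) * hermite (S n) y ^ 2))
    with (- (y ^ 2 * exp (- y ^ 2) * hermite (S n) y ^ 2 / INR (S n))) by (field; lra).
  lra.
Qed.

Lemma lyapunov_0 n :
  lyapunov n 0 = (1 + / (2 * INR (S n))) * hermite (S n) 0 ^ 2 + 2 * INR (S n) * hermite n 0 ^ 2.
Proof.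
  unfold lyapunov, hfun. rewrite hermite_SS.
  replace (- 0 ^ 2) with 0 by ring. rewrite exp_0.
  field. pose proof (lt_0_INR (S n) ltac:(lia)). lra.
Qed.

(** * The Gaussian integral *)

Lemma ex_RInt_gauss a b : ex_RInt (fun u => exp (- u ^ 2)) a b.
Proof.
  apply (ex_RInt_continuous (V := R_CompleteNormedModule)). intros x _.
  apply (ex_derive_continuous (K := R_AbsRing) (V := R_NormedModule)). auto_derive. easy.
Qed.

Definition gauss_int (x : R) : R := RInt (fun u => exp (- u ^ 2)) 0 x.

Lemma is_derive_gauss_int x : is_derive gauss_int x (exp (- x ^ 2)).
Proof.
  apply (is_derive_RInt (fun u => exp (- u ^ 2)) gauss_int 0 x).
  - apply filter_forall; intro b. apply (RInt_correct (V := R_CompleteNormedModule)), ex_RInt_gauss.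
  - apply (ex_derive_continuous (K := R_AbsRing) (V := R_NormedModule)). auto_derive. easy.
Qed.

Lemma RInt_gauss_dilate x : RInt (fun t => x * exp (- (x * t) ^ 2)) 0 1 = gauss_int x.
Proof.
  pose proof (RInt_comp_lin (V := R_CompleteNormedModule) (fun u => exp (- u ^ 2)) x 0 0 1
    (ex_RInt_gauss _ _)) as H.
  rewrite !Rmult_0_r, Rmult_1_r, !Rplus_0_r in H. unfold gauss_int. rewrite <- H.
  apply RInt_ext. intros t _. unfold scal; simpl; unfold mult; simpl. rewrite Rplus_0_r. reflexivity.
Qed.

Definition gauss_aux_integrand (x t : R) : R := exp (- x ^ 2 * (1 + t ^ 2)) / (1 + t ^ 2).

Definition gauss_aux (x : R) : R := RInt (gauss_aux_integrand x) 0 1.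

Lemma is_derive_gauss_aux_integrand x t :
  is_derive (fun u => gauss_aux_integrand u t) x (- 2 * x * exp (- x ^ 2 * (1 + t ^ 2))).
Proof.
  pose proof (pow2_ge_0 t). unfold gauss_aux_integrand. auto_derive; [lra |].
  replace (- (x * (x * 1)) * (1 + t * (t * 1))) with (- x ^ 2 * (1 + t ^ 2)) by ring.
  field. lra.
Qed.

Lemma continuity_2d_pt_gauss_aux_dx x t :
  continuity_2d_pt (fun u v => - 2 * u * exp (- u ^ 2 * (1 + v ^ 2))) x t.
Proof.
  apply continuity_2d_pt_mult.
  - apply continuity_2d_pt_mult; [apply continuity_2d_pt_const | apply continuity_2d_pt_id1].
  - apply continuity_1d_2d_pt_comp; [apply derivable_continuous_pt, derivable_exp |].
    apply continuity_2d_pt_mult.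
    + apply continuity_2d_pt_opp. simpl.
      apply continuity_2d_pt_mult; [apply continuity_2d_pt_id1 |].
      apply continuity_2d_pt_mult; [apply continuity_2d_pt_id1 | apply continuity_2d_pt_const].
    + apply continuity_2d_pt_plus; [apply continuity_2d_pt_const |]. simpl.
      apply continuity_2d_pt_mult; [apply continuity_2d_pt_id2 |].
      apply continuity_2d_pt_mult; [apply continuity_2d_pt_id2 | apply continuity_2d_pt_const].
Qed.

Lemma ex_RInt_gauss_aux_integrand x a b : ex_RInt (gauss_aux_integrand x) a b.
Proof.
  apply (ex_RInt_continuous (V := R_CompleteNormedModule)). intros t _.
  apply (ex_derive_continuous (K := R_AbsRing) (V := R_NormedModule)). unfold gauss_aux_integrand.
  auto_derive. pose proof (pow2_ge_0 t). lra.
Qed.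

Lemma is_derive_gauss_aux x : is_derive gauss_aux x (- 2 * exp (- x ^ 2) * gauss_int x).
Proof.
  assert (H : is_derive gauss_aux x (RInt (fun t => Derive (fun u => gauss_aux_integrand u t) x) 0 1)).
  { apply (is_derive_RInt_param gauss_aux_integrand).
    - apply filter_forall. intros y t _. eexists. apply is_derive_gauss_aux_integrand.
    - intros t _. eapply continuity_2d_pt_ext; [| apply continuity_2d_pt_gauss_aux_dx].
      intros u v. symmetry. apply is_derive_unique, is_derive_gauss_aux_integrand.
    - apply filter_forall. intro y. apply ex_RInt_gauss_aux_integrand. }
  replace (- 2 * exp (- x ^ 2) * gauss_int x)
    with (RInt (fun t => Derive (fun u => gauss_aux_integrand u t) x) 0 1); [exact H |].
  rewrite <- RInt_gauss_dilate.
  transitivity (RInt (fun t => (- 2 * exp (- x ^ 2)) * (x * exp (- (x * t) ^ 2))) 0 1).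
  - apply RInt_ext. intros t _.
    replace (Derive _ x) with (- 2 * x * exp (- x ^ 2 * (1 + t ^ 2)))
      by (symmetry; apply is_derive_unique, is_derive_gauss_aux_integrand).
    replace (- 2 * exp (- x ^ 2) * (x * exp (- (x * t) ^ 2)))
      with (- 2 * x * (exp (- x ^ 2) * exp (- (x * t) ^ 2))) by ring.
    rewrite <- exp_plus. do 2 f_equal. ring.
  - apply (RInt_scal (V := R_CompleteNormedModule)).
    apply (ex_RInt_continuous (V := R_CompleteNormedModule)). intros t _.
    apply (ex_derive_continuous (K := R_AbsRing) (V := R_NormedModule)). auto_derive. easy.
Qed.

Lemma gauss_aux_0 : gauss_aux 0 = PI / 4.
Proof.
  unfold gauss_aux, gauss_aux_integrand.
  rewrite (RInt_ext _ (fun t => / (1 + t ^ 2))).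
  2: { intros t _. replace (- 0 ^ 2 * (1 + t ^ 2)) with 0 by ring. rewrite exp_0. apply Rmult_1_l. }
  rewrite (is_RInt_unique _ 0 1 (atan 1 - atan 0)), atan_1, atan_0; [lra |].
  apply (is_RInt_derive (V := R_CompleteNormedModule) atan).
  - intros t _. rewrite <- Rsqr_pow2. apply is_derive_atan.
  - intros t _. apply (ex_derive_continuous (K := R_AbsRing) (V := R_NormedModule)).
    auto_derive. pose proof (pow2_ge_0 t). lra.
Qed.

Lemma gauss_int_sqr x : gauss_int x ^ 2 = PI / 4 - gauss_aux x.
Proof.
  enough (gauss_int x ^ 2 + gauss_aux x = gauss_int 0 ^ 2 + gauss_aux 0) as H.
  { rewrite gauss_aux_0 in H. unfold gauss_int at 2 in H. rewrite RInt_point in H.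
    unfold zero in H; simpl in H. lra. }
  apply (is_derive_0_const (fun y => gauss_int y ^ 2 + gauss_aux y)). intro y.
  pose proof (is_derive_gauss_int y) as DA. pose proof (is_derive_gauss_aux y) as DB.
  auto_derive.
  - repeat split; eexists; eassumption.
  - rewrite (is_derive_unique (fun z : R => gauss_int z) _ _ DA).
    rewrite (is_derive_unique (fun z : R => gauss_aux z) _ _ DB). ring.
Qed.

Lemma exp_le_exp a b : a <= b -> exp a <= exp b.
Proof. intros [H | ->]; [left; apply exp_increasing, H | right; reflexivity]. Qed.

Lemma gauss_aux_bounds x : 0 <= gauss_aux x <= exp (- x ^ 2).
Proof.
  pose proof (ex_RInt_gauss_aux_integrand x 0 1) as Hex.
  assert (Hf : forall t, 0 < gauss_aux_integrand x t <= exp (- x ^ 2)).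
  { intro t. unfold gauss_aux_integrand.
    pose proof (pow2_ge_0 t). pose proof (pow2_ge_0 x).
    pose proof (exp_pos (- x ^ 2 * (1 + t ^ 2))).
    assert (exp (- x ^ 2 * (1 + t ^ 2)) <= exp (- x ^ 2)) by (apply exp_le_exp; nra).
    split; [apply Rdiv_lt_0_compat; lra |].
    apply Rle_trans with (exp (- x ^ 2 * (1 + t ^ 2))); [| assumption].
    apply Rmult_le_reg_r with (1 + t ^ 2); [lra |].
    unfold Rdiv. rewrite Rmult_assoc, Rinv_l by lra. nra. }
  split.
  - apply RInt_ge_0; [lra | exact Hex |]. intros t _. apply Rlt_le, Hf.
  - eapply Rle_trans.
    + apply (RInt_le _ (fun _ => exp (- x ^ 2))); [lra | exact Hex | apply ex_RInt_const |].
      intros t _. apply Hf.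
    + rewrite RInt_const. unfold scal; simpl; unfold mult; simpl. lra.
Qed.

Lemma exp_neg_sqr_le_inv x : 1 <= x -> exp (- x ^ 2) <= / x.
Proof.
  intro Hx.
  assert (exp x * exp (- x ^ 2) <= 1).
  { rewrite <- exp_plus, <- exp_0. apply exp_le_exp. nra. }
  pose proof (exp_ineq1_le x). pose proof (exp_pos (- x ^ 2)).
  apply Rmult_le_reg_l with x; [lra |]. rewrite Rinv_r by lra. nra.
Qed.

Lemma filterlim_p_infty_of_inv_bound (f : R -> R) l C :
  (forall x, 1 <= x -> Rabs (f x - l) <= C / x) -> filterlim f (Rbar_locally p_infty) (locally l).
Proof.
  intros Hb P [eps HP].
  pose proof (cond_pos eps) as He.
  exists (1 + Rabs C / eps). intros x Hx.
  assert (0 <= Rabs C / eps) by (apply Rdiv_le_0_compat; [apply Rabs_pos | lra]).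
  apply HP. change (Rabs (f x - l) < eps).
  apply Rle_lt_trans with (C / x); [apply Hb; lra |].
  apply Rle_lt_trans with (Rabs C / x); [apply Rmult_le_compat_r; [apply Rlt_le, Rinv_0_lt_compat; lra | apply Rle_abs] |].
  apply Rmult_lt_reg_r with x; [lra |].
  unfold Rdiv. rewrite Rmult_assoc, Rinv_l, Rmult_1_r by lra.
  replace (Rabs C) with (Rabs C / eps * eps) by (field; lra). nra.
Qed.

Lemma gauss_int_lim : filterlim gauss_int (Rbar_locally p_infty) (locally (sqrt PI / 2)).
Proof.
  apply (filterlim_p_infty_of_inv_bound _ _ (2 / sqrt PI)). intros x Hx.
  pose proof PI_RGT_0.
  assert (Hs : 0 < sqrt PI) by (apply sqrt_lt_R0; lra).
  pose proof (sqrt_sqrt PI ltac:(lra)) as Hs2.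
  pose proof (gauss_int_sqr x) as HA. pose proof (gauss_aux_bounds x) as [HB0 HB1].
  pose proof (exp_neg_sqr_le_inv x Hx) as He.
  assert (HA0 : 0 <= gauss_int x).
  { apply RInt_ge_0; [lra | apply ex_RInt_gauss |]. intros; apply Rlt_le, exp_pos. }
  assert (Habs : Rabs (gauss_int x - sqrt PI / 2) * (gauss_int x + sqrt PI / 2) = gauss_aux x).
  { rewrite <- (Rabs_pos_eq (gauss_int x + sqrt PI / 2)), <- Rabs_mult by lra.
    replace ((gauss_int x - sqrt PI / 2) * (gauss_int x + sqrt PI / 2)) with (- gauss_aux x) by nra.
    rewrite Rabs_Ropp. apply Rabs_pos_eq, HB0. }
  apply Rle_trans with (/ x / (gauss_int x + sqrt PI / 2)).
  - apply Rmult_le_reg_r with (gauss_int x + sqrt PI / 2); [lra |].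
    unfold Rdiv. rewrite Rmult_assoc, Rinv_l, Rmult_1_r by lra. lra.
  - replace (2 / sqrt PI / x) with (/ x / (sqrt PI / 2)) by (field; lra).
    apply Rmult_le_compat_l; [apply Rlt_le, Rinv_0_lt_compat; lra |].
    apply Rinv_le_contravar; lra.
Qed.

(** * Gamma at half-integers *)

Definition Gamma_integrand (s t : R) : R := Rpower t (s - 1) * exp (- t).

Lemma filter_prod_at_right_0_p_infty (P : R * R -> Prop) :
  (forall a b, 0 < a -> 0 < b -> P (a, b)) -> filter_prod (at_right 0) (Rbar_locally p_infty) P.
Proof.
  intro H. apply (Filter_prod _ _ _ (fun a => 0 < a) (fun b => 0 < b)); [| exists 0; auto | exact H].
  unfold at_right, within. apply filter_forall. auto.
Qed.

Lemma is_RInt_gen_0_p_infty_derive (F f : R -> R) la lb :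
  (forall x, 0 < x -> is_derive F x (f x)) ->
  (forall x, 0 < x -> continuous f x) ->
  filterlim F (at_right 0) (locally la) ->
  filterlim F (Rbar_locally p_infty) (locally lb) ->
  is_RInt_gen f (at_right 0) (Rbar_locally p_infty) (lb - la).
Proof.
  intros HF Hf H0 H1.
  eapply is_RInt_gen_ext; [| apply (is_RInt_gen_Derive F la lb)]; try exact H0; try exact H1;
    apply filter_prod_at_right_0_p_infty; intros a b Ha Hb x [Hx _]; simpl in Hx;
    assert (Hx0 : 0 < x) by (pose proof (Rmin_glb_lt a b 0 Ha Hb); lra).
  - apply is_derive_unique, HF, Hx0.
  - eexists. apply HF, Hx0.
  - apply (continuous_ext_loc _ f); [| apply Hf, Hx0].
    apply (filter_imp (fun y => 0 < y)); [| apply (open_gt 0 x Hx0)].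
    intros y Hy. symmetry. apply is_derive_unique, HF, Hy.
Qed.

Lemma filterlim_at_right_continuity_pt (F h : R -> R) x :
  (forall t, x < t -> F t = h t) -> continuity_pt h x -> filterlim F (at_right x) (locally (h x)).
Proof.
  intros Heq Hc. apply (filterlim_within_ext _ h); [intros; symmetry; auto |].
  eapply filterlim_filter_le_1; [apply filter_le_within |].
  apply continuity_pt_filterlim, Hc.
Qed.

Lemma is_RInt_gen_Gamma_half : is_RInt_gen (Gamma_integrand (/ 2)) (at_right 0) (Rbar_locally p_infty) (sqrt PI).
Proof.
  replace (sqrt PI) with (2 * (sqrt PI / 2) - 2 * gauss_int (sqrt 0))
    by (rewrite sqrt_0; unfold gauss_int; rewrite RInt_point; unfold zero; simpl; field).
  apply (is_RInt_gen_0_p_infty_derive (fun t => 2 * gauss_int (sqrt t))).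
  - intros x Hx. pose proof (is_derive_gauss_int (sqrt x)) as DA.
    auto_derive; [repeat split; [eexists; exact DA | exact Hx] |].
    rewrite (is_derive_unique (fun z : R => gauss_int z) _ _ DA).
    unfold Gamma_integrand. replace (/ 2 - 1) with (- / 2) by field.
    rewrite Rpower_Ropp, Rpower_sqrt, <- Rsqr_pow2, Rsqr_sqrt by lra.
    field. apply Rgt_not_eq, sqrt_lt_R0, Hx.
  - intros x Hx. apply (ex_derive_continuous (K := R_AbsRing) (V := R_NormedModule)).
    unfold Gamma_integrand, Rpower. auto_derive. exact Hx.
  - apply (filterlim_at_right_continuity_pt _ (fun t => 2 * gauss_int (sqrt t))); [easy |].
    apply continuity_pt_scal, (continuity_pt_comp sqrt gauss_int); [apply continuity_pt_sqrt; lra |].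
    apply continuity_pt_filterlim, (ex_derive_continuous (K := R_AbsRing) (V := R_NormedModule)).
    eexists; apply is_derive_gauss_int.
  - apply (filterlim_comp _ _ _ (fun t => gauss_int (sqrt t)) (fun y => 2 * y) _ (locally (sqrt PI / 2))).
    + apply (filterlim_comp _ _ _ sqrt gauss_int _ (Rbar_locally p_infty)).
      * apply filterlim_sqrt_p.
      * apply gauss_int_lim.
    + apply (continuity_pt_filterlim (fun y => 2 * y)), continuity_pt_scal, continuity_pt_id.
Qed.

Lemma pow_le_exp k t : 0 <= t -> t ^ k <= INR k ^ k * exp t.
Proof.
  intro Ht. destruct k as [|k]; [simpl; pose proof (exp_ineq1_le t); lra |].
  assert (HK : 0 < INR (S k)) by (apply lt_0_INR; lia).
  set (u := t / INR (S k)).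
  assert (Hu : 0 <= u) by (apply Rdiv_le_0_compat; lra).
  replace t with (INR (S k) * u) at 1 2 by (unfold u; field; lra).
  assert (Hexp : exp (INR (S k) * u) = exp u ^ S k).
  { rewrite <- Rpower_pow by apply exp_pos. unfold Rpower. rewrite ln_exp. reflexivity. }
  rewrite Hexp, Rpow_mult_distr. apply Rmult_le_compat_l; [apply pow_le; lra |].
  apply pow_incr. pose proof (exp_ineq1_le u). lra.
Qed.

Lemma Rpower_half_int t m : 0 < t -> Rpower t (INR m + / 2) = t ^ m * sqrt t.
Proof. intro Ht. rewrite Rpower_plus, Rpower_pow, Rpower_sqrt by exact Ht. reflexivity. Qed.

Lemma half_int_power_exp_le m t :
  1 <= t -> Rpower t (INR m + / 2) * exp (- t) <= INR (S (S m)) ^ S (S m) / t.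
Proof.
  intro Ht. rewrite Rpower_half_int by lra.
  set (K := INR (S (S m)) ^ S (S m)).
  assert (HK : t ^ S (S m) * exp (- t) <= K).
  { pose proof (pow_le_exp (S (S m)) t ltac:(lra)) as Hpow.
    rewrite exp_Ropp. apply Rmult_le_reg_r with (exp t); [apply exp_pos |].
    rewrite Rmult_assoc, Rinv_l, Rmult_1_r by apply Rgt_not_eq, exp_pos. exact Hpow. }
  assert (Hsqrt : sqrt t <= t).
  { assert (1 <= sqrt t) by (rewrite <- sqrt_1; apply sqrt_le_1_alt, Ht).
    pose proof (sqrt_sqrt t ltac:(lra)). nra. }
  pose proof (exp_pos (- t)). pose proof (pow_le t m ltac:(lra)).
  apply Rmult_le_reg_r with t; [lra |].
  replace (K / t * t) with K by (field; lra).
  assert (t ^ m * sqrt t * t * exp (- t) <= t ^ m * t * t * exp (- t)).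
  { apply Rmult_le_compat_r; [lra |]. apply Rmult_le_compat_r; [lra |].
    apply Rmult_le_compat_l; lra. }
  simpl in HK. lra.
Qed.

Lemma filterlim_half_int_power_exp_0 m :
  filterlim (fun t => Rpower t (INR m + / 2) * exp (- t)) (at_right 0) (locally 0).
Proof.
  set (h := fun t => t ^ m * sqrt t * exp (- t)).
  assert (Hh0 : h 0 = 0) by (unfold h; rewrite sqrt_0; ring).
  assert (Hh : continuity_pt h 0).
  { apply continuity_pt_mult; [apply continuity_pt_mult |].
    - apply derivable_continuous_pt, derivable_pt_pow.
    - apply continuity_pt_sqrt; lra.
    - apply derivable_continuous_pt, derivable_pt_comp;
        [apply derivable_pt_opp, derivable_pt_id | apply derivable_pt_exp]. }
  rewrite <- Hh0 at 2. apply (filterlim_at_right_continuity_pt _ h 0); [| exact Hh].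
  intros t Ht. rewrite Rpower_half_int by exact Ht. reflexivity.
Qed.

Lemma filterlim_half_int_power_exp_p_infty m :
  filterlim (fun t => Rpower t (INR m + / 2) * exp (- t)) (Rbar_locally p_infty) (locally 0).
Proof.
  apply (filterlim_p_infty_of_inv_bound _ _ (INR (S (S m)) ^ S (S m))). intros t Ht.
  rewrite Rminus_0_r, Rabs_pos_eq; [apply half_int_power_exp_le, Ht |].
  apply Rmult_le_pos; apply Rlt_le; [apply exp_pos | apply exp_pos].
Qed.

Lemma is_RInt_gen_Gamma_half_int_S m l :
  is_RInt_gen (Gamma_integrand (INR m + / 2)) (at_right 0) (Rbar_locally p_infty) l ->
  is_RInt_gen (Gamma_integrand (INR (S m) + / 2)) (at_right 0) (Rbar_locally p_infty)
    ((INR m + / 2) * l).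
Proof.
  intro Hl. set (s := INR m + / 2) in *.
  replace (INR (S m) + / 2) with (s + 1) by (unfold s; rewrite S_INR; ring).
  assert (Hparts : is_RInt_gen (fun t => s * Gamma_integrand s t - Gamma_integrand (s + 1) t)
                     (at_right 0) (Rbar_locally p_infty) (0 - 0)).
  { apply (is_RInt_gen_0_p_infty_derive (fun t => Rpower t s * exp (- t))).
    - intros t Ht. unfold Gamma_integrand, Rpower. auto_derive; [exact Ht |].
      replace (s + 1 - 1) with s by ring.
      replace ((s - 1) * ln t) with (s * ln t + - ln t) by ring.
      rewrite exp_plus, (exp_Ropp (ln t)), exp_ln by exact Ht. field. lra.
    - intros t Ht. apply (ex_derive_continuous (K := R_AbsRing) (V := R_NormedModule)).
      unfold Gamma_integrand, Rpower. auto_derive. repeat split; exact Ht.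
    - apply filterlim_half_int_power_exp_0.
    - apply filterlim_half_int_power_exp_p_infty. }
  replace (s * l) with (minus (scal s l) (0 - 0))
    by (unfold minus, plus, opp, scal; simpl; unfold mult; simpl; ring).
  eapply is_RInt_gen_ext; [| exact (is_RInt_gen_minus _ _ _ _ (is_RInt_gen_scal _ s _ Hl) Hparts)].
  apply filter_prod_at_right_0_p_infty. intros a b _ _ t _.
  unfold minus, plus, opp, scal; simpl; unfold mult; simpl. ring.
Qed.

Lemma is_RInt_gen_Gamma_half_int m :
  is_RInt_gen (Gamma_integrand (INR m + / 2)) (at_right 0) (Rbar_locally p_infty) (Gamma (INR m + / 2)).
Proof.
  apply (RInt_gen_correct (V := R_CompleteNormedModule)).
  induction m as [|m [l IH]].
  - exists (sqrt PI). rewrite Rplus_0_l. exact is_RInt_gen_Gamma_half.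
  - eexists. exact (is_RInt_gen_Gamma_half_int_S m l IH).
Qed.

Lemma Gamma_half : Gamma (/ 2) = sqrt PI.
Proof. apply is_RInt_gen_unique, is_RInt_gen_Gamma_half. Qed.

Lemma Gamma_half_int_S m : Gamma (INR (S m) + / 2) = (INR m + / 2) * Gamma (INR m + / 2).
Proof. apply is_RInt_gen_unique, is_RInt_gen_Gamma_half_int_S, is_RInt_gen_Gamma_half_int. Qed.

Lemma Gamma_half_int_sqr m : 16 ^ m * Gamma (INR m + / 2) ^ 2 = PI * hermite (2 * m) 0 ^ 2.
Proof.
  induction m as [|m IH].
  - rewrite Rplus_0_l, Gamma_half, hermite_0. simpl.
    rewrite Rmult_1_r, sqrt_sqrt; [ring |]. pose proof PI_RGT_0. lra.
  - rewrite Gamma_half_int_S, hermite_even_0_S, S_INR, mult_INR.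
    replace (16 ^ S m * ((INR m + / 2) * Gamma (INR m + / 2)) ^ 2)
      with (16 * (INR m + / 2) ^ 2 * (16 ^ m * Gamma (INR m + / 2) ^ 2)) by (simpl; ring).
    rewrite IH. simpl. field.
Qed.

Lemma lyapunov_0_eq_hbound n : lyapunov n 0 = hbound n.
Proof.
  rewrite lyapunov_0. unfold hbound. pose proof PI_RGT_0.
  destruct (Nat.Even_or_Odd n) as [[m ->] | [m ->]].
  - replace (Nat.odd (2 * m)) with false by (rewrite Nat.odd_mul; reflexivity).
    replace ((INR (2 * m) + 1) / 2) with (INR m + / 2) by (rewrite mult_INR; simpl; field).
    rewrite hermite_odd_0.
    replace (Gamma (INR m + / 2) ^ 2) with (PI * hermite (2 * m) 0 ^ 2 / 16 ^ m)
      by (rewrite <- Gamma_half_int_sqr; field; apply pow_nonzero; lra).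
    replace (4 ^ S (2 * m)) with (4 * 16 ^ m) by (change (4 ^ S (2 * m)) with (4 * 4 ^ (2 * m)); rewrite pow_mult; replace (4 ^ 2) with 16 by ring; reflexivity).
    rewrite S_INR, mult_INR. simpl INR.
    assert (0 < 16 ^ m) by (apply pow_lt; lra). pose proof (pos_INR m).
    field. lra.
  - replace (Nat.odd (2 * m + 1)) with true by (rewrite Nat.odd_add, Nat.odd_mul; reflexivity).
    replace (2 * m + 1)%nat with (S (2 * m)) by lia.
    replace (INR (S (2 * m)) / 2 + 1) with (INR (S m) + / 2) by (rewrite !S_INR, mult_INR; simpl; field).
    replace (S (S (2 * m))) with (2 * S m)%nat by lia.
    rewrite hermite_odd_0.
    replace (Gamma (INR (S m) + / 2) ^ 2) with (PI * hermite (2 * S m) 0 ^ 2 / 16 ^ S m)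
      by (rewrite <- Gamma_half_int_sqr; field; apply pow_nonzero; lra).
    replace (4 ^ (2 * S m)) with (16 ^ S m) by (rewrite pow_mult; replace (4 ^ 2) with 16 by ring; reflexivity).
    replace (INR (2 * S m)) with (2 * INR m + 2) by (rewrite mult_INR, (S_INR m); simpl; ring).
    replace (INR (S (2 * m))) with (2 * INR m + 1) by (rewrite S_INR, mult_INR; simpl; ring).
    assert (0 < 16 ^ S m) by (apply pow_lt; lra). pose proof (pos_INR m).
    field. lra.
Qed.

Theorem lemma3p2 (n : nat) :
  (forall x : R, 0 < hfun n x) /\ (forall x : R, hfun n x <= hbound n).
Proof.
  split; intro x.
  - apply Rmult_lt_0_compat; [apply exp_pos | apply turan_pos].
  - rewrite <- lyapunov_0_eq_hbound.
    apply Rle_trans with (lyapunov n x); [apply hfun_le_lyapunov | apply lyapunov_le_0].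
Qed.
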